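(* Let $W\in\mathbb C^{N\times N}$ be Hermitian positive definite, $\vec b\in\mathbb C^N$ with $\|\vec b\|_2=1$, and let $\vec x_k$ be the $k$-th iterate of the MINRES algorithm applied to $W\vec x=\vec b$. Let $\mu_T$ be the spectral measure of $(W,\vec b)$. Then for every $k\in\mathbb N$ (for which the orthogonal polynomials up to degree $k+1$ are defined), $$\|\vec r_k\|_2^2=\frac{1}{\sum_{j=0}^kp_j(0;\mu_T)^2}=\frac{1}{b_k(\mu_T)\big[p_{k+1}'(0;\mu_T)p_k(0;\mu_T)-p_k'(0;\mu_T)p_{k+1}(0;\mu_T)\big]}=\frac{\prod_{j=0}^{k-1}b_j(\mu_T)^2}{\pi_{k+1}'(0;\mu_T)\pi_k(0;\mu_T)-\pi_k'(0;\mu_T)\pi_{k+1}(0;\mu_T)}.$$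
   Context: Write $W=U\Lambda U^*$ with $U$ unitary and $\Lambda=\mathrm{diag}(\lambda_1,\dots,\lambda_N)$; the spectral measure of $(W,\vec b)$ is $\mu_T=\sum_j\omega_j\delta_{\lambda_j}$, $(\omega_j)=|U^*\vec b|^2$ (entrywise). $p_n(\lambda;\mu)$ are the orthonormal polynomials with positive leading coefficient for $\mu$; they satisfy $\lambda p_n=b_np_{n+1}+a_np_n+b_{n-1}p_{n-1}$ with $b_n=b_n(\mu)>0$, $p_{-1}=0$. $\pi_n(\lambda;\mu)$ is the monic orthogonal polynomial of degree $n$; primes denote derivatives in $\lambda$. MINRES iterate: $\vec x_k=\mathrm{argmin}_{\vec y\in\mathcal K_k}\|\vec b-W\vec y\|_2$ with $\mathcal K_k=\mathrm{span}\{\vec b,W\vec b,\dots,W^{k-1}\vec b\}$; $\vec r_k=\vec b-W\vec x_k$. *)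

(* Complex scalars: an arbitrary numClosedFieldType C
   (e.g. algC, or complex R for R : rcfType). *)
From HB Require Import structures.
From mathcomp Require Import all_boot all_order all_algebra.
From mathcomp Require Export sesquilinear spectral.
Set Implicit Arguments. Unset Strict Implicit. Unset Printing Implicit Defensive.
Import Order.TTheory GRing.Theory Num.Theory.
Local Open Scope ring_scope.
Local Open Scope sesquilinear_scope.

Definition norm2sq (C : numClosedFieldType) (N : nat) (v : 'cV[C]_N) : C :=
  \sum_(i < N) `|v i 0| ^+ 2.

Definition in_krylov (C : numClosedFieldType) (N : nat) (W : 'M[C]_N)
  (b : 'cV[C]_N) (k : nat) (y : 'cV[C]_N) : Prop :=
  exists c : 'I_k -> C, y = \sum_(i < k) c i *: (W ^+ i *m b).

Definition is_minres_iterate (C : numClosedFieldType) (N : nat) (W : 'M[C]_N)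
  (b : 'cV[C]_N) (k : nat) (x : 'cV[C]_N) : Prop :=
  in_krylov W b k x /\
  forall y, in_krylov W b k y -> norm2sq (b - W *m x) <= norm2sq (b - W *m y).

(* Spectral measure mu_T = sum_j omega_j delta_{lambda_j} of (W,b), where
   W = U Lambda U^*, Lambda = diag_mx Lam:  lambda_j = Lam 0 j,
   (omega_j) = |U^* b|^2 entrywise. *)
Definition spec_nodes (C : numClosedFieldType) (N : nat) (Lam : 'rV[C]_N)
  : 'I_N -> C := fun j => Lam 0 j.
Definition spec_weights (C : numClosedFieldType) (N : nat) (U : 'M[C]_N)
  (b : 'cV[C]_N) : 'I_N -> C := fun j => `|(U ^t* *m b) j 0| ^+ 2.

Definition mu_ip (C : numClosedFieldType) (N : nat) (lam om : 'I_N -> C)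
  (f g : {poly C}) : C :=
  \sum_(j < N) om j * f.[lam j] * (g.[lam j])^*.

Definition is_orthonormal_family (C : numClosedFieldType) (N : nat)
  (lam om : 'I_N -> C) (n : nat) (p : nat -> {poly C}) : Prop :=
  (forall i, (i <= n)%N -> size (p i) = i.+1 /\ 0 < lead_coef (p i)) /\
  (forall i j, (i <= n)%N -> (j <= n)%N -> mu_ip lam om (p i) (p j) = (i == j)%:R).

(* b_n(mu): coefficient of p_{n+1} in the three-term recurrence
   lambda p_n = b_n p_{n+1} + a_n p_n + b_{n-1} p_{n-1},
   i.e. b_n = <lambda p_n, p_{n+1}>_mu. *)
Definition rec_b (C : numClosedFieldType) (N : nat) (lam om : 'I_N -> C)
  (p : nat -> {poly C}) (n : nat) : C :=
  mu_ip lam om ('X * p n) (p n.+1).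

Definition monic_op (C : numClosedFieldType) (p : nat -> {poly C}) (n : nat)
  : {poly C} := (lead_coef (p n))^-1 *: p n.

From HB Require Import structures.
From mathcomp Require Import all_boot all_order all_algebra.
From mathcomp Require Import sesquilinear spectral.
From mathcomp Require Import ring zify.
Import Order.TTheory GRing.Theory Num.Theory.
Set Implicit Arguments. Unset Strict Implicit. Unset Printing Implicit Defensive.
Local Open Scope ring_scope.
Local Open Scope sesquilinear_scope.

(** The residual of y = \sum_i c_i W^i b is q(W) b with q = 1 - X \sum_i c_i X^i,
    and every polynomial q of degree at most k with q(0) = 1 is of this form.
    Diagonalising W = U Λ U^* gives ||q(W) b||^2 = \sum_j ω_j |q(λ_j)|^2 = <q, q>_μ,
    so MINRES minimises <q, q>_μ subject to q(0) = 1.  As q(0) = <q, K_k(., 0)>_μ for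
    the reproducing kernel K_k(x, 0) = \sum_(j <= k) p_j(0) p_j(x) (the p_j(0) are
    real because the recurrence coefficients are), the minimum is the Christoffel
    function λ_k(0) = 1 / K_k(0, 0), attained at K_k(., 0) / K_k(0, 0).  Evaluating
    the three-term recurrence and its derivative at 0 yields the Christoffel-Darboux
    identity b_k (p_(k+1)'(0) p_k(0) - p_k'(0) p_(k+1)(0)) = K_k(0, 0); its monic form
    follows from b_j = lead p_j / lead p_(j+1) and p_0 = 1. *)

Section ResidualPoly.
Variables (R : nzRingType) (k : nat).

Definition residual_poly (c : 'I_k -> R) : {poly R} :=
  1 - 'X * \sum_(i < k) c i *: 'X^i.

Lemma residual_poly_at0 c : (residual_poly c).[0] = 1.
Proof. by rewrite horner_coef0 coefB coef1 coefXM subr0. Qed.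

Lemma size_residual_poly c : (size (residual_poly c) <= k.+1)%N.
Proof.
apply/leq_sizeP => -[|i] // le_ki; rewrite coefB coef1 coefXM sub0r coef_sum.
rewrite big1 ?oppr0 // => j _.
by rewrite coefZ coefXn gtn_eqF ?mulr0 // (leq_trans (ltn_ord j)).
Qed.

Lemma residual_polyE (q : {poly R}) : (size q <= k.+1)%N -> q.[0] = 1 ->
  q = residual_poly (fun i => - q`_i.+1).
Proof.
move=> size_q q0; apply/polyP => -[|i].
  by rewrite -horner_coef0 q0 -horner_coef0 residual_poly_at0.
rewrite coefB coef1 coefXM sub0r coef_sum.
under eq_bigr => j _ do rewrite coefZ coefXn.
have [lt_ik|le_ki] := ltnP i k.
  rewrite (bigD1 (Ordinal lt_ik)) //= eqxx mulr1 big1 ?addr0 ?opprK // => j.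
  by rewrite -val_eqE /= eq_sym => /negbTE ->; rewrite mulr0.
rewrite big1 ?oppr0 ?(leq_sizeP _ _ size_q) // => j _.
by rewrite gtn_eqF ?mulr0 // (leq_trans (ltn_ord j)).
Qed.

End ResidualPoly.

Section ChristoffelDarbouxRecurrence.
Variables (R : comNzRingType) (K : nat) (a b u v : nat -> R).
Hypothesis rec_u : forall n, (n < K)%N ->
  0 = (if n is m.+1 then b m * u m else 0) + a n * u n + b n * u n.+1.
Hypothesis rec_v : forall n, (n < K)%N ->
  u n = (if n is m.+1 then b m * v m else 0) + a n * v n + b n * v n.+1.

Lemma christoffel_darboux_step n : (n < K)%N ->
  b n * (v n.+1 * u n - v n * u n.+1) =
  v n * (if n is m.+1 then b m * u m else 0)
  - u n * (if n is m.+1 then b m * v m else 0) + u n ^+ 2.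
Proof.
move=> lt_nK; have Eu := rec_u lt_nK; have Ev := rec_v lt_nK.
set Pu := (if n is m.+1 then b m * u m else 0) in Eu *.
set Pv := (if n is m.+1 then b m * v m else 0) in Ev *.
transitivity (v n * Pu - u n * Pv + u n * (Pv + a n * v n + b n * v n.+1)
  - v n * (Pu + a n * u n + b n * u n.+1)); first by ring.
by rewrite -Eu -Ev; ring.
Qed.

Lemma christoffel_darboux_rec n : (n < K)%N ->
  b n * (v n.+1 * u n - v n * u n.+1) = \sum_(j < n.+1) u j ^+ 2.
Proof.
elim: n => [|n IH] lt_nK; rewrite christoffel_darboux_step // big_ord_recr /=.
  by rewrite big_ord0 !mulr0 subrr.
by rewrite -IH ?(ltnW lt_nK) //; congr (_ + _); ring.
Qed.

End ChristoffelDarbouxRecurrence.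

Section RealRecurrence.
Variables (F : numFieldType) (K : nat) (a b u : nat -> F).
Hypothesis rec_u : forall n, (n < K)%N ->
  0 = (if n is m.+1 then b m * u m else 0) + a n * u n + b n * u n.+1.
Hypothesis a_real : forall n, (n < K)%N -> a n \is Num.real.
Hypothesis b_real : forall n, (n < K)%N -> b n \is Num.real.
Hypothesis b_neq0 : forall n, (n < K)%N -> b n != 0.
Hypothesis u0_real : u 0%N \is Num.real.

Lemma recurrence_real n : (n <= K)%N -> u n \is Num.real.
Proof.
elim/ltn_ind: n => -[|n] IH // lt_nK.
have -> : u n.+1 = - ((if n is m.+1 then b m * u m else 0) + a n * u n) / b n.
  apply: (canRL (mulfK (b_neq0 lt_nK))); apply/eqP.
  by rewrite -addr_eq0 addrC [u _ * _]mulrC -(rec_u lt_nK).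
have u_real m : (m <= n)%N -> u m \is Num.real.
  by move=> le_mn; apply: IH; last exact: leq_trans le_mn (ltnW lt_nK).
rewrite rpred_div ?b_real // rpredN rpredD ?rpredM ?a_real ?u_real //.
case: n {IH} lt_nK u_real => [|m] lt_nK u_real; first exact: rpred0.
by rewrite rpredM ?u_real ?b_real // ltnW.
Qed.

End RealRecurrence.

Lemma horner_deriv0 (R : nzRingType) (q : {poly R}) : q^`().[0] = q`_1.
Proof. by rewrite horner_coef0 coef_deriv. Qed.

Section DiscreteInnerProduct.
Variables (C : numClosedFieldType) (N : nat) (lam om : 'I_N -> C).
Hypothesis lam_real : forall j, lam j \is Num.real.
Hypothesis om_ge0 : forall j, 0 <= om j.

Local Notation ip := (mu_ip lam om).

Lemma mu_ip_suml I (r : seq I) (P : pred I) (F : I -> {poly C}) g :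
  ip (\sum_(i <- r | P i) F i) g = \sum_(i <- r | P i) ip (F i) g.
Proof.
rewrite /mu_ip exchange_big; apply: eq_bigr => j _.
by rewrite horner_sum mulr_sumr mulr_suml.
Qed.

Lemma mu_ipZl a f g : ip (a *: f) g = a * ip f g.
Proof.
by rewrite /mu_ip mulr_sumr; apply: eq_bigr => j _; rewrite hornerZ; ring.
Qed.

Lemma mu_ipBl f h g : ip (f - h) g = ip f g - ip h g.
Proof.
by rewrite /mu_ip -sumrB; apply: eq_bigr => j _; rewrite hornerD hornerN; ring.
Qed.

Lemma mu_ipC f g : ip g f = (ip f g)^*.
Proof.
rewrite /mu_ip rmorph_sum; apply: eq_bigr => j _.
by rewrite !rmorphM /= conjCK (geC0_conj (om_ge0 j)) mulrAC.
Qed.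

Lemma mu_ip_sumr I (r : seq I) (P : pred I) (F : I -> {poly C}) f :
  ip f (\sum_(i <- r | P i) F i) = \sum_(i <- r | P i) ip f (F i).
Proof.
rewrite mu_ipC mu_ip_suml rmorph_sum.
by apply: eq_bigr => i _; rewrite [RHS]mu_ipC.
Qed.

Lemma mu_ipZr a f g : ip f (a *: g) = a^* * ip f g.
Proof. by rewrite mu_ipC mu_ipZl rmorphM /= -mu_ipC. Qed.

Lemma mu_ipBr f g h : ip f (g - h) = ip f g - ip f h.
Proof. by rewrite mu_ipC mu_ipBl rmorphB /= -!mu_ipC. Qed.

Lemma mu_ipxx_ge0 f : 0 <= ip f f.
Proof.
apply: sumr_ge0 => j _; rewrite -mulrA.
by apply: mulr_ge0 => //; apply: mul_conjC_ge0.
Qed.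

Lemma mu_ipXl f g : ip ('X * f) g = ip f ('X * g).
Proof.
apply: eq_bigr => j _; have /CrealP lamj := lam_real j.
by rewrite ![('X * _)]mulrC !hornerMX rmorphM /= lamj; ring.
Qed.

Section OrthonormalFamily.
Variables (K : nat) (p : nat -> {poly C}).
Hypothesis p_on : is_orthonormal_family lam om K p.

Lemma size_p n : (n <= K)%N -> size (p n) = n.+1.
Proof. by move=> /(p_on.1 n) []. Qed.

Lemma lead_p_gt0 n : (n <= K)%N -> 0 < lead_coef (p n).
Proof. by move=> /(p_on.1 n) []. Qed.

Lemma coef_p_deg n : (n <= K)%N -> (p n)`_n = lead_coef (p n).
Proof. by move=> le_nK; rewrite lead_coefE size_p. Qed.

Lemma mu_ip_pp i j : (i <= K)%N -> (j <= K)%N -> ip (p i) (p j) = (i == j)%:R.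
Proof. exact: p_on.2. Qed.

Lemma orthonormal_span m (q : {poly C}) : (m <= K.+1)%N -> (size q <= m)%N ->
  exists a : nat -> C, q = \sum_(j < m) a j *: p j.
Proof.
elim: m q => [|m IH] q le_mK size_q.
  by exists (fun=> 0); rewrite big_ord0; apply/size_poly_leq0P.
set c := q`_m / lead_coef (p m).
have [|a Ea] := IH (q - c *: p m) (ltnW le_mK).
  apply/leq_sizeP => j; rewrite leq_eqVlt => /predU1P[<-|lt_mj].
    by rewrite coefB coefZ coef_p_deg // divfK ?subrr // gt_eqF ?lead_p_gt0.
  rewrite coefB coefZ !nth_default ?mulr0 ?subrr ?size_p //.
  exact: leq_trans size_q lt_mj.
exists (fun j => if j == m then c else a j).
rewrite big_ord_recr /= eqxx -[q](subrK (c *: p m)) Ea; congr (_ + _).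
by apply: eq_bigr => j _; rewrite ltn_eqF.
Qed.

Lemma mu_ip_sum_p m (a : nat -> C) i : (m <= K.+1)%N -> (i <= K)%N ->
  ip (\sum_(j < m) a j *: p j) (p i) = if (i < m)%N then a i else 0.
Proof.
move=> le_mK le_iK; rewrite mu_ip_suml.
rewrite (eq_bigr (fun j : 'I_m => a j * (j == i :> nat)%:R)) => [|j _]; last first.
  by rewrite mu_ipZl mu_ip_pp //; exact: leq_trans (ltn_ord j) le_mK.
case: ltnP => [lt_im|le_mi].
  rewrite (bigD1 (Ordinal lt_im)) //= eqxx mulr1 big1 ?addr0 // => j.
  by rewrite -val_eqE /= => /negbTE ->; rewrite mulr0.
by rewrite big1 // => j _; rewrite ltn_eqF ?mulr0 // (leq_trans (ltn_ord j)).
Qed.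

Lemma orthonormal_expansion m (q : {poly C}) :
  (m <= K.+1)%N -> (size q <= m)%N -> q = \sum_(j < m) ip q (p j) *: p j.
Proof.
move=> le_mK size_q; have [a Ea] := orthonormal_span le_mK size_q.
rewrite {1}Ea; apply: eq_bigr => j _.
by rewrite Ea mu_ip_sum_p ?ltn_ord //; exact: leq_trans (ltn_ord j) le_mK.
Qed.

Lemma mu_ip_lower_p n (g : {poly C}) :
  (n <= K)%N -> (size g <= n)%N -> ip g (p n) = 0.
Proof.
move=> le_nK size_g; rewrite (orthonormal_expansion _ size_g) ?leqW //.
by rewrite (mu_ip_sum_p (fun j => ip g (p j))) ?ltnn ?leqW.
Qed.

Lemma size_Xp n : (n <= K)%N -> (size ('X * p n)%R <= n.+2)%N.
Proof.
by move=> le_nK; rewrite (leq_trans (size_polyMleq _ _)) ?size_polyX ?size_p.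
Qed.

Local Notation rec_a n := (ip ('X * p n) (p n)).
Local Notation bn := (rec_b lam om p).

Lemma rec_bE n : (n < K)%N -> bn n = lead_coef (p n) / lead_coef (p n.+1).
Proof.
move=> lt_nK; have le_nK := ltnW lt_nK.
set c := lead_coef (p n) / lead_coef (p n.+1).
have size_r : (size ('X * p n - c *: p n.+1)%R <= n.+1)%N.
  apply/leq_sizeP => j; rewrite leq_eqVlt => /predU1P[<-|lt_nj].
    rewrite coefB coefZ coefXM /= !coef_p_deg //.
    by rewrite divfK ?subrr // gt_eqF ?lead_p_gt0.
  rewrite coefB coefZ coefXM; case: j lt_nj => // j lt_nj.
  by rewrite /= !nth_default ?mulr0 ?subrr ?size_p.
have /eqP := mu_ip_lower_p lt_nK size_r.
by rewrite mu_ipBl mu_ipZl mu_ip_pp // eqxx mulr1 subr_eq0 => /eqP.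
Qed.

Lemma rec_b_gt0 n : (n < K)%N -> 0 < bn n.
Proof. by move=> lt_nK; rewrite rec_bE // divr_gt0 ?lead_p_gt0 // ltnW. Qed.

Lemma rec_a_real n : rec_a n \is Num.real.
Proof. by apply/CrealP; rewrite -mu_ipC -mu_ipXl. Qed.

Lemma three_term_recurrence n : (n < K)%N ->
  'X * p n = (if n is m.+1 then bn m *: p m else 0)
             + rec_a n *: p n + bn n *: p n.+1.
Proof.
move=> lt_nK; have le_nK := ltnW lt_nK.
rewrite {1}(orthonormal_expansion (m := n.+2) lt_nK (size_Xp le_nK)).
rewrite !big_ord_recr /=; congr (_ + _ + _).
case: n lt_nK le_nK => [|m] lt_mK le_mK; first by rewrite big_ord0.
rewrite big_ord_recr /= big1 ?add0r => [|j _].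
  by rewrite mu_ipXl mu_ipC (geC0_conj (ltW (rec_b_gt0 _))) // ltnW.
have lt_jm := ltn_ord j.
by rewrite mu_ipXl mu_ipC mu_ip_lower_p ?conjC0 ?scale0r
  ?(leq_trans (size_Xp _)) //; lia.
Qed.

Lemma three_term_recurrence_at0 n : (n < K)%N ->
  0 = (if n is m.+1 then bn m * (p m).[0] else 0) + rec_a n * (p n).[0]
      + bn n * (p n.+1).[0].
Proof.
move=> /three_term_recurrence /(congr1 (horner^~ 0)).
by case: n => [|m]; rewrite /= mulrC hornerMX mulr0 !hornerD !hornerZ ?horner0.
Qed.

Lemma three_term_recurrence_deriv0 n : (n < K)%N ->
  (p n).[0] = (if n is m.+1 then bn m * (p m)^`().[0] else 0)
              + rec_a n * (p n)^`().[0] + bn n * (p n.+1)^`().[0].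
Proof.
move=> /three_term_recurrence /(congr1 (fun q : {poly C} => q`_1)).
by case: n => [|m];
  rewrite /= coefXM horner_coef0 !horner_deriv0 !coefD !coefZ ?coef0.
Qed.

Lemma christoffel_darboux0 k : (k < K)%N ->
  bn k * ((p k.+1)^`().[0] * (p k).[0] - (p k)^`().[0] * (p k.+1).[0])
  = \sum_(j < k.+1) (p j).[0] ^+ 2.
Proof.
apply: (@christoffel_darboux_rec _ K (fun n => rec_a n) bn (fun n => (p n).[0])
                                 (fun n => (p n)^`().[0])).
  exact: three_term_recurrence_at0.
exact: three_term_recurrence_deriv0.
Qed.

Section UnitMass.
Hypothesis om_sum1 : \sum_j om j = 1.

Lemma p0_eq1 : p 0 = 1.
Proof.
have c_gt0 := lead_p_gt0 (leq0n K).
have Ep : p 0 = (lead_coef (p 0))%:P.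
  by rewrite -coef_p_deg // -size1_polyC ?size_p.
set c := lead_coef (p 0) in c_gt0 Ep *.
have c2 : c ^+ 2 = 1.
  have := mu_ip_pp (leq0n K) (leq0n K); rewrite eqxx mulr1n Ep => <-.
  rewrite /mu_ip -[LHS]mulr1 -om_sum1 mulr_sumr; apply: eq_bigr => j _.
  by rewrite !hornerC (geC0_conj (ltW c_gt0)); ring.
rewrite Ep -polyC1; congr _%:P.
by apply/eqP; rewrite -(pexpr_eq1 (n := 2)) ?c2 ?ltW.
Qed.

Lemma p_at0_real n : (n <= K)%N -> (p n).[0] \is Num.real.
Proof.
apply: (@recurrence_real _ K (fun n => rec_a n) bn (fun n => (p n).[0])).
- exact: three_term_recurrence_at0.
- by move=> m _; apply: rec_a_real.
- by move=> m lt_mK; rewrite gtr0_real ?rec_b_gt0.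
- by move=> m lt_mK; rewrite gt_eqF ?rec_b_gt0.
- by rewrite p0_eq1 hornerC rpred1.
Qed.

Local Notation kernel00 k := (\sum_(j < k.+1) (p j).[0] ^+ 2).
Local Notation christoffel k := (kernel00 k)^-1.
Local Notation kernel0 k := (christoffel k *: \sum_(j < k.+1) (p j).[0] *: p j).

Lemma kernel00_gt0 k : (k <= K)%N -> 0 < kernel00 k.
Proof.
move=> le_kK; apply: (lt_le_trans ltr01).
rewrite big_ord_recl p0_eq1 hornerC expr1n lerDl; apply: sumr_ge0 => j _.
by rewrite real_exprn_even_ge0 // p_at0_real // (leq_trans (ltn_ord j)).
Qed.

Lemma christoffel_ge0 k : (k <= K)%N -> 0 <= christoffel k.
Proof. by move=> le_kK; rewrite invr_ge0 ltW ?kernel00_gt0. Qed.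

Lemma mu_ip_kernel0 k (q : {poly C}) : (k <= K)%N -> (size q <= k.+1)%N ->
  ip q (kernel0 k) = q.[0] * christoffel k.
Proof.
move=> le_kK size_q; have Eq := orthonormal_expansion (m := k.+1) le_kK size_q.
rewrite mu_ipZr geC0_conj ?christoffel_ge0 // mulrC [in RHS]Eq horner_sum.
rewrite mu_ip_sumr; congr (_ * _); apply: eq_bigr => j _.
have /CrealP pj0 : (p j).[0] \is Num.real.
  by rewrite p_at0_real // (leq_trans (ltnSE (ltn_ord j)) le_kK).
by rewrite mu_ipZr hornerZ pj0 mulrC.
Qed.

Lemma size_kernel0 k : (k <= K)%N -> (size (kernel0 k) <= k.+1)%N.
Proof.
move=> le_kK; rewrite (leq_trans (size_scale_leq _ _)) //.
apply: (leq_trans (size_sum _ _ _)); apply/bigmax_leqP => j _.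
rewrite (leq_trans (size_scale_leq _ _)) // size_p //.
exact: leq_trans (ltnSE (ltn_ord j)) le_kK.
Qed.

Lemma kernel0_at0 k : (k <= K)%N -> (kernel0 k).[0] = 1.
Proof.
move=> le_kK; rewrite hornerZ horner_sum mulrC.
under eq_bigr do rewrite hornerZ -expr2.
by rewrite mulfV // gt_eqF ?kernel00_gt0.
Qed.

Lemma christoffel_min k (q : {poly C}) :
  (k <= K)%N -> (size q <= k.+1)%N -> q.[0] = 1 -> christoffel k <= ip q q.
Proof.
move=> le_kK size_q q0; have := mu_ipxx_ge0 (q - kernel0 k).
rewrite mu_ipBl !mu_ipBr (mu_ipC q (kernel0 k)).
rewrite !mu_ip_kernel0 ?size_kernel0 ?kernel0_at0 ?q0 ?mul1r //.
by rewrite geC0_conj ?christoffel_ge0 // subrr subr0 subr_ge0.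
Qed.

Lemma mu_ip_kernel0_self k : (k <= K)%N ->
  ip (kernel0 k) (kernel0 k) = christoffel k.
Proof. by move=> le_kK; rewrite mu_ip_kernel0 ?size_kernel0 ?kernel0_at0 ?mul1r. Qed.

Lemma prod_rec_b n : (n <= K)%N -> \prod_(j < n) bn j = (lead_coef (p n))^-1.
Proof.
elim: n => [|n IH] lt_nK; first by rewrite big_ord0 p0_eq1 lead_coef1 invr1.
have le_nK := ltnW lt_nK.
by rewrite big_ord_recr /= IH // rec_bE // mulrA mulVf ?mul1r // gt_eqF ?lead_p_gt0.
Qed.

Lemma christoffel_darboux_monic0 k : (k < K)%N ->
  \prod_(j < k) bn j ^+ 2
  / ((monic_op p k.+1)^`().[0] * (monic_op p k).[0]
     - (monic_op p k)^`().[0] * (monic_op p k.+1).[0])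
  = christoffel k.
Proof.
move=> lt_kK; have le_kK := ltnW lt_kK.
have l0_neq0 := lt0r_neq0 (lead_p_gt0 le_kK).
have l1_neq0 := lt0r_neq0 (lead_p_gt0 lt_kK).
have := kernel00_gt0 le_kK; rewrite -(christoffel_darboux0 lt_kK) rec_bE //.
rewrite prodrXl prod_rec_b // /monic_op !derivZ !hornerZ.
set l0 := lead_coef (p k) in l0_neq0 *; set l1 := lead_coef (p k.+1) in l1_neq0 *.
set D := _ - _ => cd_gt0.
have D_neq0 : D != 0 by apply: contraTneq cd_gt0 => ->; rewrite mulr0 ltxx.
rewrite [_ - _](_ : _ = (l0 * l1)^-1 * D); last first.
  by rewrite /D; field; rewrite l0_neq0 l1_neq0.
by clearbody l0 l1 D; field; rewrite l0_neq0 l1_neq0 D_neq0.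
Qed.

End UnitMass.
End OrthonormalFamily.
End DiscreteInnerProduct.

Lemma adjmxM (C : numClosedFieldType) m n r (A : 'M[C]_(m, n)) (B : 'M[C]_(n, r)) :
  (A *m B) ^t* = B ^t* *m A ^t*.
Proof. by rewrite trmx_mul map_mxM. Qed.

Lemma norm2sqE (C : numClosedFieldType) N (v : 'cV[C]_N) : norm2sq v = (v ^t* *m v) 0 0.
Proof. by rewrite /norm2sq mxE; apply: eq_bigr => j _; rewrite !mxE normCK mulrC. Qed.

Section SpectralMeasure.
Variables (C : numClosedFieldType) (N : nat) (W : 'M[C]_N) (b : 'cV[C]_N)
  (U : 'M[C]_N) (Lam : 'rV[C]_N).
Hypothesis U_unitary : U \is unitarymx.
Hypothesis W_spectral : W = U *m diag_mx Lam *m U ^t*.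

Local Notation lam := (spec_nodes Lam).
Local Notation om := (spec_weights U b).

Lemma mulUtU : U ^t* *m U = 1%:M.
Proof. exact/mulmx1C/unitarymxP. Qed.

Lemma norm2sq_mulUt (v : 'cV[C]_N) : norm2sq (U ^t* *m v) = norm2sq v.
Proof.
by rewrite !norm2sqE adjmxM trmxCK mulmxA -(mulmxA _ U) (unitarymxP _) ?mulmx1.
Qed.

Lemma sum_spec_weights : \sum_j om j = norm2sq b.
Proof. by rewrite -norm2sq_mulUt. Qed.

Lemma spec_nodes_real : W ^t* = W -> forall j, lam j \is Num.real.
Proof.
move=> W_herm j; have : (U ^t* *m W *m U) ^t* = U ^t* *m W *m U.
  by rewrite !adjmxM trmxCK W_herm mulmxA.
rewrite W_spectral !mulmxA mulUtU mul1mx -mulmxA mulUtU mulmx1.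
by move=> /matrixP /(_ j j); rewrite !mxE eqxx mulr1n => /CrealP.
Qed.

Lemma mulUtW : U ^t* *m W = diag_mx Lam *m U ^t*.
Proof. by rewrite W_spectral !mulmxA mulUtU mul1mx. Qed.

Lemma mulUtWn i (v : 'cV[C]_N) j :
  (U ^t* *m (W ^+ i *m v)) j 0 = lam j ^+ i * (U ^t* *m v) j 0.
Proof.
elim: i => [|i IH]; first by rewrite expr0 -idmxE mul1mx mul1r.
rewrite exprS -mulmxE -mulmxA mulmxA mulUtW -mulmxA mul_diag_mx mxE IH.
by rewrite mulrA -exprS.
Qed.

Lemma krylov_residual_norm k (c : 'I_k -> C) :
  norm2sq (b - W *m \sum_(i < k) c i *: (W ^+ i *m b))
  = mu_ip lam om (residual_poly c) (residual_poly c).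
Proof.
rewrite -norm2sq_mulUt /norm2sq /mu_ip; apply: eq_bigr => j _.
have entryB (A B : 'cV[C]_N) : (A - B) j 0 = A j 0 - B j 0 by rewrite !mxE.
have -> : (U ^t* *m (b - W *m \sum_(i < k) c i *: (W ^+ i *m b))) j 0
          = (residual_poly c).[lam j] * (U ^t* *m b) j 0.
  rewrite mulmxBr entryB (mulUtWn 1) mulmx_sumr summxE.
  under eq_bigr => i _ do rewrite -scalemxAr [(_ *: _ : 'cV[C]_N) _ _]mxE mulUtWn.
  rewrite /residual_poly hornerD hornerN hornerC hornerM hornerX horner_sum.
  rewrite mulrBl mul1r -mulrA mulr_suml; congr (_ - _ * _).
  by apply: eq_bigr => i _; rewrite hornerZ hornerXn mulrA.
by rewrite /spec_weights normrM exprMn !normCK; ring.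
Qed.

End SpectralMeasure.

Lemma minres_residual_norm (C : numClosedFieldType) (N : nat)
  (W : 'M[C]_N) (b : 'cV[C]_N) (U : 'M[C]_N) (Lam : 'rV[C]_N)
  (K k : nat) (x : 'cV[C]_N) (p : nat -> {poly C}) :
  W ^t* = W -> norm2sq b = 1 -> U \is unitarymx ->
  W = U *m diag_mx Lam *m U ^t* -> (k <= K)%N ->
  is_minres_iterate W b k x ->
  is_orthonormal_family (spec_nodes Lam) (spec_weights U b) K p ->
  norm2sq (b - W *m x) = (\sum_(j < k.+1) (p j).[0] ^+ 2)^-1.
Proof.
move=> W_herm b_unit U_unitary W_spectral le_kK [[c ->] x_min] p_on.
have lam_real := spec_nodes_real U_unitary W_spectral W_herm.
have om_ge0 j : 0 <= spec_weights U b j by apply: exprn_ge0.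
have om_sum1 : \sum_j spec_weights U b j = 1 by rewrite sum_spec_weights.
have Q_norm := krylov_residual_norm b U_unitary W_spectral.
apply/eqP; rewrite eq_le; apply/andP; split.
  rewrite -(mu_ip_kernel0_self lam_real om_ge0 p_on om_sum1 le_kK).
  rewrite (residual_polyE (size_kernel0 p_on le_kK)
                          (kernel0_at0 lam_real om_ge0 p_on om_sum1 le_kK)).
  by rewrite -Q_norm; apply: x_min; eexists.
rewrite Q_norm; apply: (christoffel_min lam_real om_ge0 p_on om_sum1 le_kK).
  exact: size_residual_poly.
exact: residual_poly_at0.
Qed.

Theorem proposition4p2 (C : numClosedFieldType) (N : nat)
  (W : 'M[C]_N) (b : 'cV[C]_N) (U : 'M[C]_N) (Lam : 'rV[C]_N) :
  W ^t* = W ->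
  (forall v : 'cV[C]_N, v != 0 -> 0 < (v ^t* *m W *m v) 0 0) ->
  norm2sq b = 1 ->
  U \is unitarymx ->
  W = U *m diag_mx Lam *m U ^t* ->
  forall (k : nat) (x : 'cV[C]_N) (p : nat -> {poly C}),
    is_minres_iterate W b k x ->
    is_orthonormal_family (spec_nodes Lam) (spec_weights U b) k.+1 p ->
    let lam := spec_nodes Lam in
    let om := spec_weights U b in
    let bn := rec_b lam om p in
    let pim := monic_op p in
    let r := b - W *m x in
    norm2sq r = 1 / \sum_(j < k.+1) (p j).[0] ^+ 2 /\
    norm2sq r = 1 / (bn k * ((p k.+1)^`().[0] * (p k).[0]
                             - (p k)^`().[0] * (p k.+1).[0])) /\
    norm2sq r = (\prod_(j < k) bn j ^+ 2) /
                ((pim k.+1)^`().[0] * (pim k).[0]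
                 - (pim k)^`().[0] * (pim k.+1).[0]).
Proof.
move=> W_herm _ b_unit U_unitary W_spectral k x p x_minres p_on lam om bn pim r.
have lam_real := spec_nodes_real U_unitary W_spectral W_herm.
have om_ge0 j : 0 <= om j by apply: exprn_ge0.
have om_sum1 : \sum_j om j = 1 by rewrite sum_spec_weights.
have r_norm := minres_residual_norm W_herm b_unit U_unitary W_spectral
                 (leqnSn k) x_minres p_on.
rewrite /r r_norm !div1r /bn (christoffel_darboux0 lam_real om_ge0 p_on) //.
by rewrite (christoffel_darboux_monic0 lam_real om_ge0 p_on om_sum1).
Qed.
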